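(* Let $(\mathbf{x}_t,\mathbf{z}_t,\mathbf{y}_t)_{t\ge0}$ be generated by generalized Bregman ADMM under the standing assumptions and Assumption 1, and let $(\mathbf{x}^*,\mathbf{z}^*,\mathbf{y}^* )$ be a KKT point. Let $\sigma=\min\{1,m^{\frac{2}{p}-1}\}$, let $0<\gamma<\frac{\alpha\sigma}{2}$, and suppose $\tau\le(\alpha\sigma-2\gamma)\rho$. Then for every $t\ge0$, $$R(t+1)\le D(\mathbf{w}^*,\mathbf{w}_t)-D(\mathbf{w}^*,\mathbf{w}_{t+1}).$$
   Context: Problem: $f:\mathbb{R}^{n_1}\to\mathbb{R}\cup\{+\infty\}$ and $g:\mathbb{R}^{n_2}\to\mathbb{R}\cup\{+\infty\}$; $\mathbf{A}\in\mathbb{R}^{m\times n_1}$, $\mathbf{B}\in\mathbb{R}^{m\times n_2}$, $\mathbf{c}\in\mathbb{R}^m$; $\mathcal{X}\subseteq\mathbb{R}^{n_1}$, $\mathcal{Z}\subseteq\mathbb{R}^{n_2}$ convex; the problem is $\min f(\mathbf{x})+g(\mathbf{z})$ s.t. $\mathbf{x}\in\mathcal{X},\mathbf{z}\in\mathcal{Z},\mathbf{A}\mathbf{x}+\mathbf{B}\mathbf{z}=\mathbf{c}$. For a continuously differentiable, strictly convex function $\psi$ on (the relative interior of) a convex set, $B_\psi(\mathbf{u},\mathbf{v})=\psi(\mathbf{u})-\psi(\mathbf{v})-\langle\nabla\psi(\mathbf{v}),\mathbf{u}-\mathbf{v}\rangle\ge 0$. Three such functions are fixed: $\phi$ (on a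 convex subset of $\mathbb{R}^m$), $\varphi_{\mathbf{x}}$ (on $\mathbb{R}^{n_1}$ or a convex subset), $\varphi_{\mathbf{z}}$ (on $\mathbb{R}^{n_2}$ or a convex subset). Generalized Bregman ADMM: given $(\mathbf{x}_0,\mathbf{z}_0,\mathbf{y}_0)$ and parameters $\rho>0,\tau>0,\rho_{\mathbf{x}}\ge0,\rho_{\mathbf{z}}\ge0$, for $t\ge0$: $\mathbf{x}_{t+1}=\arg\min_{\mathbf{x}\in\mathcal{X}} f(\mathbf{x})+\langle\mathbf{y}_t,\mathbf{A}\mathbf{x}+\mathbf{B}\mathbf{z}_t-\mathbf{c}\rangle+\rho B_\phi(\mathbf{c}-\mathbf{A}\mathbf{x},\mathbf{B}\mathbf{z}_t)+\rho_{\mathbf{x}}B_{\varphi_{\mathbf{x}}}(\mathbf{x},\mathbf{x}_t)$; $\mathbf{z}_{t+1}=\arg\min_{\mathbf{z}\in\mathcal{Z}} g(\mathbf{z})+\langle\mathbf{y}_t,\mathbf{A}\mathbf{x}_{t+1}+\mathbf{B}\mathbf{z}-\mathbf{c}\rangle+\rho B_\phi(\mathbf{B}\mathbf{z},\mathbf{c}-\mathbf{A}\mathbf{x}_{t+1})+\rho_{\mathbf{z}}B_{\varphi_{\mathbf{z}}}(\mathbf{z},\mathbf{z}_t)$; $\mathbf{y}_{t+1}=\mathbf{y}_t+\tau(\mathbf{A}\mathbf{x}_{t+1}+\mathbf{B}\mathbf{z}_{t+1}-\mathbf{c})$. Standing assumptions: the minimizers exist; all Bregman divergences are evaluated at points where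 they are defined; and the minimizers satisfy the first-order optimality conditions $-\mathbf{A}^T\{\mathbf{y}_t+\rho(\nabla\phi(\mathbf{B}\mathbf{z}_t)-\nabla\phi(\mathbf{c}-\mathbf{A}\mathbf{x}_{t+1}))\}-\rho_{\mathbf{x}}(\nabla\varphi_{\mathbf{x}}(\mathbf{x}_{t+1})-\nabla\varphi_{\mathbf{x}}(\mathbf{x}_t))\in\partial f(\mathbf{x}_{t+1})$ and $-\mathbf{B}^T\{\mathbf{y}_t+\rho(\nabla\phi(\mathbf{B}\mathbf{z}_{t+1})-\nabla\phi(\mathbf{c}-\mathbf{A}\mathbf{x}_{t+1}))\}-\rho_{\mathbf{z}}(\nabla\varphi_{\mathbf{z}}(\mathbf{z}_{t+1})-\nabla\varphi_{\mathbf{z}}(\mathbf{z}_t))\in\partial g(\mathbf{z}_{t+1})$. Assumption 1: (a) $f,g$ are closed, proper, convex; (b) an optimal solution exists; (c) $\phi$ is $\alpha$-strongly convex w.r.t. a $p$-norm ($p>0$), i.e. $B_\phi(\mathbf{u},\mathbf{v})\ge\frac{\alpha}{2}\|\mathbf{u}-\mathbf{v}\|_p^2$ with $\alpha>0$. A KKT point is $(\mathbf{x}^*,\mathbf{z}^*,\mathbf{y}^* )$ with $-\mathbf{A}^T\mathbf{y}^*\in\partial f(\mathbf{x}^* )$, $-\mathbf{B}^T\mathbf{y}^*\in\partial g(\mathbf{z}^* )$, $\mathbf{A}\mathbf{x}^*+\mathbf{B}\mathbf{z}^*=\mathbf{c}$. With $\mathbf{w}_t=(\mathbf{x}_t,\mathbf{z}_t,\mathbf{y}_t)$,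 $\mathbf{w}^*=(\mathbf{x}^*,\mathbf{z}^*,\mathbf{y}^* )$ and $\gamma>0$: $R(t+1)=\frac{\rho_{\mathbf{x}}}{\rho}B_{\varphi_{\mathbf{x}}}(\mathbf{x}_{t+1},\mathbf{x}_t)+\frac{\rho_{\mathbf{z}}}{\rho}B_{\varphi_{\mathbf{z}}}(\mathbf{z}_{t+1},\mathbf{z}_t)+B_\phi(\mathbf{c}-\mathbf{A}\mathbf{x}_{t+1},\mathbf{B}\mathbf{z}_t)+\gamma\|\mathbf{A}\mathbf{x}_{t+1}+\mathbf{B}\mathbf{z}_{t+1}-\mathbf{c}\|_2^2$, $D(\mathbf{w}^*,\mathbf{w}_t)=\frac{1}{2\tau\rho}\|\mathbf{y}^*-\mathbf{y}_t\|_2^2+B_\phi(\mathbf{B}\mathbf{z}^*,\mathbf{B}\mathbf{z}_t)+\frac{\rho_{\mathbf{x}}}{\rho}B_{\varphi_{\mathbf{x}}}(\mathbf{x}^*,\mathbf{x}_t)+\frac{\rho_{\mathbf{z}}}{\rho}B_{\varphi_{\mathbf{z}}}(\mathbf{z}^*,\mathbf{z}_t)$. *)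

From mathcomp Require Import ssreflect ssrfun ssrbool eqtype ssrnat seq fintype bigop.
From Stdlib Require Import Reals.
Set Implicit Arguments. Unset Strict Implicit.
Local Open Scope R_scope.

Definition vec (n : nat) := 'I_n -> R.
Definition mat (m n : nat) := 'I_m -> 'I_n -> R.

Definition sumR (n : nat) (F : 'I_n -> R) : R := \big[Rplus/R0]_(i < n) F i.

Definition vadd n (u v : vec n) : vec n := fun i => u i + v i.
Definition vsub n (u v : vec n) : vec n := fun i => u i - v i.
Definition vscale n (a : R) (u : vec n) : vec n := fun i => a * u i.
Definition dot n (u v : vec n) : R := sumR (fun i => u i * v i).
Definition sqnorm2 n (u : vec n) : R := dot u u.
Definition mulmv m n (A : mat m n) (x : vec n) : vec m :=
  fun i => sumR (fun j => A i j * x j).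
Definition tmulmv m n (A : mat m n) (y : vec m) : vec n :=
  fun j => sumR (fun i => A i j * y i).

(* real power x^a for x >= 0, with the convention 0^a = 0 (a > 0) *)
Definition rpow (x a : R) : R :=
  if Rlt_dec 0 x then Rpower x a else 0.
Definition pnorm n (p : R) (u : vec n) : R :=
  rpow (sumR (fun i => rpow (Rabs (u i)) p)) (/ p).

(* Extended reals R U {+oo}: None stands for +oo *)
Definition ER := option R.
Definition ERadd (a : ER) (r : R) : ER :=
  match a with Some x => Some (x + r) | None => None end.
Definition ERle (a b : ER) : Prop :=
  match a, b with
  | _, None => True
  | None, Some _ => False
  | Some x, Some y => x <= y
  end.
Definition ERplus (a b : ER) : ER :=
  match a, b with Some x, Some y => Some (x + y) | _, _ => None end.

Definition convex_set n (S : vec n -> Prop) : Prop :=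
  forall u v (l : R), S u -> S v -> 0 <= l <= 1 ->
    S (vadd (vscale l u) (vscale (1 - l) v)).
Definition vconv n (u : nat -> vec n) (v : vec n) : Prop :=
  forall i, Un_cv (fun k => u k i) (v i).
Definition closed_set n (S : vec n -> Prop) : Prop :=
  forall (u : nat -> vec n) v, (forall k, S (u k)) -> vconv u v -> S v.

Definition proper_fun n (f : vec n -> ER) : Prop := exists x, f x <> None.
Definition convex_fun n (f : vec n -> ER) : Prop :=
  forall u v (l : R), 0 <= l <= 1 ->
    ERle (f (vadd (vscale l u) (vscale (1 - l) v)))
         (ERplus (option_map (Rmult l) (f u)) (option_map (Rmult (1 - l)) (f v))).
(* closed = lower semicontinuous = all sublevel sets closed *)
Definition closed_fun n (f : vec n -> ER) : Prop :=
  forall r : R, closed_set (fun x => ERle (f x) (Some r)).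

Definition subgrad n (f : vec n -> ER) (x g : vec n) : Prop :=
  f x <> None /\ forall u, ERle (ERadd (f x) (dot g (vsub u x))) (f u).

Definition breg n (psi : vec n -> R) (gpsi : vec n -> vec n) (u v : vec n) : R :=
  psi u - psi v - dot (gpsi v) (vsub u v).

(* psi is continuously differentiable (with gradient gpsi) and strictly convex
   on the convex set S; derivatives are taken within S (directional
   derivatives along directions pointing into S). *)
Definition bregman_generator n (S : vec n -> Prop) (psi : vec n -> R)
    (gpsi : vec n -> vec n) : Prop :=
  convex_set S /\
  (forall u v (l : R), S u -> S v -> u <> v -> 0 < l < 1 ->
     psi (vadd (vscale l u) (vscale (1 - l) v)) < l * psi u + (1 - l) * psi v) /\
  (forall v u, S v -> S u ->
     forall eps, eps > 0 -> exists delta, delta > 0 /\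
       forall s, 0 < s < delta ->
         Rabs ((psi (vadd v (vscale s (vsub u v))) - psi v) / s
               - dot (gpsi v) (vsub u v)) < eps) /\
  (forall v, S v -> forall eps, eps > 0 -> exists delta, delta > 0 /\
     forall u, S u -> (forall i, Rabs (u i - v i) < delta) ->
       forall i, Rabs (gpsi u i - gpsi v i) < eps).

(* The quantities R(t+1) and D(w^*, w_t) of the paper, written for generic
   arguments (x_{t+1}, z_{t+1}, x_t, z_t) and (x^*,z^*,y^*,x_t,z_t,y_t). *)
Definition Rquant n1 n2 m
    (phi : vec m -> R) (gphi : vec m -> vec m)
    (phix : vec n1 -> R) (gphix : vec n1 -> vec n1)
    (phiz : vec n2 -> R) (gphiz : vec n2 -> vec n2)
    (A : mat m n1) (B : mat m n2) (c : vec m) (rho rhox rhoz gamma : R)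
    (x1 : vec n1) (z1 : vec n2) (x0 : vec n1) (z0 : vec n2) : R :=
  rhox / rho * breg phix gphix x1 x0 + rhoz / rho * breg phiz gphiz z1 z0
  + breg phi gphi (vsub c (mulmv A x1)) (mulmv B z0)
  + gamma * sqnorm2 (vsub (vadd (mulmv A x1) (mulmv B z1)) c).

Definition Dquant n1 n2 m
    (phi : vec m -> R) (gphi : vec m -> vec m)
    (phix : vec n1 -> R) (gphix : vec n1 -> vec n1)
    (phiz : vec n2 -> R) (gphiz : vec n2 -> vec n2)
    (B : mat m n2) (rho tau rhox rhoz : R)
    (xs : vec n1) (zs : vec n2) (ys : vec m)
    (xt : vec n1) (zt : vec n2) (yt : vec m) : R :=
  / (2 * tau * rho) * sqnorm2 (vsub ys yt)
  + breg phi gphi (mulmv B zs) (mulmv B zt)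
  + rhox / rho * breg phix gphix xs xt + rhoz / rho * breg phiz gphiz zs zt.

(* Each primal update satisfies a first-order condition; comparing
   it with the KKT condition at (xs, zs, ys) through the monotonicity of the
   subdifferential and rewriting the gradient differences with the three-point
   identity of Bregman divergences gives one inequality per block
   (admm_x_step, admm_z_step), both bounded by the dual gap <ys - y_t, . >.
   The dual update turns the sum of these gaps into the decrease of
   ||ys - y||^2 / (2 tau rho) up to a tau^2 ||r||^2 term, r = A x1 + B z1 - c,
   which is absorbed by the divergence B_phi(B z1, c - A x1): by strong
   convexity and the comparison sigma ||r||_2^2 <= ||r||_p^2 (p-norm section)
   it is at least alpha sigma / 2 ||r||^2.  The remaining scalar algebra is
   isolated in descent_bookkeeping; lemma2 assembles the pieces. *)

From HB Require Import structures.
From mathcomp Require Import ssreflect ssrfun ssrbool eqtype ssrnat seq fintype bigop.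
From Stdlib Require Import Reals Lra.
Set Implicit Arguments. Unset Strict Implicit.
Local Open Scope R_scope.

HB.instance Definition _ := Monoid.isComLaw.Build R R0 Rplus
  (fun a b c => esym (Rplus_assoc a b c)) Rplus_comm Rplus_0_l.

Lemma sumR_ext n (F G : 'I_n -> R) : (forall i, F i = G i) -> sumR F = sumR G.
Proof. by move=> FG; apply: eq_bigr => i _. Qed.

Lemma sumR_add n (F G : 'I_n -> R) : sumR (fun i => F i + G i) = sumR F + sumR G.
Proof. exact: big_split. Qed.

Lemma sumR_scale n a (F : 'I_n -> R) : sumR (fun i => a * F i) = a * sumR F.
Proof.
rewrite /sumR; elim/big_rec2: _ => [|i s1 s2 _ ->]; first by rewrite Rmult_0_r.
by rewrite Rmult_plus_distr_l.
Qed.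

Lemma sumR_sub n (F G : 'I_n -> R) : sumR (fun i => F i - G i) = sumR F - sumR G.
Proof.
have -> : sumR F = sumR (fun i => F i - G i) + sumR G.
  by rewrite -sumR_add; apply: sumR_ext => i; ring.
ring.
Qed.

Lemma sumR_const n a : sumR (fun _ : 'I_n => a) = INR n * a.
Proof.
rewrite /sumR big_const_ord; elim: n => [|n IH]; first by rewrite /= Rmult_0_l.
by rewrite S_INR /= IH; ring.
Qed.

Lemma sumR_swap m n (F : 'I_m -> 'I_n -> R) :
  sumR (fun i => sumR (fun j => F i j)) = sumR (fun j => sumR (fun i => F i j)).
Proof. exact: exchange_big. Qed.

Lemma sumR_le n (F G : 'I_n -> R) : (forall i, F i <= G i) -> sumR F <= sumR G.
Proof.
move=> FG; rewrite /sumR; elim/big_rec2: _ => [|i s1 s2 _ Hs]; first lra.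
exact: Rplus_le_compat.
Qed.

Lemma sumR_ge0 n (F : 'I_n -> R) : (forall i, 0 <= F i) -> 0 <= sumR F.
Proof. by move=> F0; have := sumR_le F0; rewrite sumR_const; lra. Qed.

Lemma sumR_term_le n (F : 'I_n -> R) i : (forall j, 0 <= F j) -> F i <= sumR F.
Proof.
move=> F0; rewrite /sumR (bigD1 i) //=.
rewrite -{1}(Rplus_0_r (F i)); apply: Rplus_le_compat_l.
by elim/big_ind: _ => [| a b | j _]; [lra | lra | exact: F0].
Qed.

Lemma dot_ext n (u v w : vec n) : (forall i, v i = w i) -> dot u v = dot u w.
Proof. by move=> vw; apply: sumR_ext => i; rewrite vw. Qed.

Lemma dot_comm n (u v : vec n) : dot u v = dot v u.
Proof. by apply: sumR_ext => i; ring. Qed.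

Lemma dot_addl n (u v w : vec n) : dot (vadd u v) w = dot u w + dot v w.
Proof. by rewrite /dot -sumR_add; apply: sumR_ext => i; rewrite /vadd; ring. Qed.

Lemma dot_subl n (u v w : vec n) : dot (vsub u v) w = dot u w - dot v w.
Proof. by rewrite /dot -sumR_sub; apply: sumR_ext => i; rewrite /vsub; ring. Qed.

Lemma dot_scalel n a (u w : vec n) : dot (vscale a u) w = a * dot u w.
Proof. by rewrite /dot -sumR_scale; apply: sumR_ext => i; rewrite /vscale; ring. Qed.

Lemma dot_addr n (u v w : vec n) : dot w (vadd u v) = dot w u + dot w v.
Proof. by rewrite dot_comm dot_addl !(dot_comm _ w). Qed.

Lemma dot_subr n (u v w : vec n) : dot w (vsub u v) = dot w u - dot w v.
Proof. by rewrite dot_comm dot_subl !(dot_comm _ w). Qed.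

Lemma dot_scaler n a (u w : vec n) : dot w (vscale a u) = a * dot w u.
Proof. by rewrite dot_comm dot_scalel (dot_comm _ w). Qed.

Lemma dot_tmulmv m n (A : mat m n) (w : vec m) (v : vec n) :
  dot (tmulmv A w) v = dot w (mulmv A v).
Proof.
transitivity (sumR (fun j => sumR (fun i => A i j * w i * v j))).
  apply: sumR_ext => j; rewrite Rmult_comm -sumR_scale.
  by apply: sumR_ext => i; ring.
rewrite -sumR_swap; apply: sumR_ext => i; rewrite -sumR_scale.
by apply: sumR_ext => j; ring.
Qed.

Definition dotE := (dot_addl, dot_subl, dot_scalel, dot_addr, dot_subr, dot_scaler).

Lemma sqnorm2_sub_step n (u v r : vec n) a :
  sqnorm2 (vsub u (vadd v (vscale a r))) =
  sqnorm2 (vsub u v) - 2 * a * dot (vsub u v) r + a ^ 2 * sqnorm2 r.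
Proof. by rewrite /sqnorm2 !dotE (dot_comm r u) (dot_comm r v); ring. Qed.

Lemma sqnorm2_ge0 n (u : vec n) : 0 <= sqnorm2 u.
Proof. by apply: sumR_ge0 => i; apply: Rle_0_sqr. Qed.

Lemma sqnorm2_ext n (u v : vec n) : (forall i, u i = v i) -> sqnorm2 u = sqnorm2 v.
Proof. by move=> uv; rewrite /sqnorm2 /dot; apply: sumR_ext => i; rewrite uv. Qed.

Lemma breg_three_point n (psi : vec n -> R) gpsi a b w :
  dot (vsub (gpsi a) (gpsi b)) (vsub a w) =
  breg psi gpsi w a + breg psi gpsi a b - breg psi gpsi w b.
Proof. by rewrite /breg !dotE; ring. Qed.

Lemma subgrad_monotone n (h : vec n -> ER) a ga b gb :
  subgrad h a ga -> subgrad h b gb -> 0 <= dot (vsub ga gb) (vsub a b).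
Proof.
case=> ha ga_sub [hb gb_sub]; move: (ga_sub b) (gb_sub a).
case: (h a) ha => // ha' _; case: (h b) hb => // hb' _ /= Hab Hba.
rewrite !dotE in Hab Hba *; lra.
Qed.

(* One step of a linearized, Bregman-proximal minimization of h(a) + <w, M a>:
   comparing its optimality condition with the one of a KKT point a_s (with
   multiplier y_s) through the monotonicity of the subdifferential of h.
   Here w = y + rho (gphi u - gphi v) is the multiplier corrected by the
   gradient of the Bregman penalty, and kap weights the proximal term. *)
Lemma bregman_prox_step n k (h : vec n -> ER) (M : mat k n)
    (psi : vec n -> R) (gpsi : vec n -> vec n) (gphi : vec k -> vec k)
    (kap rho : R) (y ys u v : vec k) (a a0 a_s : vec n) :
  subgrad h a (vsub (vscale (-1) (tmulmv M (vadd y (vscale rho (vsub (gphi u) (gphi v))))))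
                    (vscale kap (vsub (gpsi a) (gpsi a0)))) ->
  subgrad h a_s (vscale (-1) (tmulmv M ys)) ->
  kap * (breg psi gpsi a_s a + breg psi gpsi a a0 - breg psi gpsi a_s a0)
  + rho * dot (vsub (gphi u) (gphi v)) (vsub (mulmv M a) (mulmv M a_s))
  <= dot (vsub ys y) (vsub (mulmv M a) (mulmv M a_s)).
Proof.
move=> ha has; have := subgrad_monotone ha has.
rewrite -breg_three_point !dotE !dot_tmulmv !dotE; lra.
Qed.

Section AdmmSteps.
Variables (n1 n2 m : nat) (A : mat m n1) (B : mat m n2).
Variables (phi : vec m -> R) (gphi : vec m -> vec m).
Variable rho : R.

Lemma admm_x_step (f : vec n1 -> ER) (phix : vec n1 -> R) (gphix : vec n1 -> vec n1)
    (rhox : R) (c ys y : vec m) (xs x0 x1 : vec n1) (zs z0 : vec n2) :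
  vadd (mulmv A xs) (mulmv B zs) = c ->
  subgrad f x1 (vsub (vscale (-1) (tmulmv A
      (vadd y (vscale rho (vsub (gphi (mulmv B z0)) (gphi (vsub c (mulmv A x1))))))))
    (vscale rhox (vsub (gphix x1) (gphix x0)))) ->
  subgrad f xs (vscale (-1) (tmulmv A ys)) ->
  rhox * (breg phix gphix xs x1 + breg phix gphix x1 x0 - breg phix gphix xs x0)
  + rho * (breg phi gphi (mulmv B zs) (vsub c (mulmv A x1))
           + breg phi gphi (vsub c (mulmv A x1)) (mulmv B z0)
           - breg phi gphi (mulmv B zs) (mulmv B z0))
  <= dot (vsub ys y) (vsub (mulmv A x1) (mulmv A xs)).
Proof.
move=> feas hx1 hxs; have := bregman_prox_step phix hx1 hxs.
set r1 := vsub c (mulmv A x1).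
have residual : forall i, vsub (mulmv A x1) (mulmv A xs) i = vsub (mulmv B zs) r1 i.
  by move=> i; rewrite /r1 -feas /vsub /vadd; ring.
have flip : forall p q s t : vec m, dot (vsub p q) (vsub s t) = dot (vsub q p) (vsub t s).
  by move=> p q s t; rewrite !dotE; ring.
by rewrite (dot_ext _ residual) flip (breg_three_point phi).
Qed.

(* The z-update, compared with the KKT point; v is the point c - A x1 at
   which the Bregman penalty of the z-subproblem is centred. *)
Lemma admm_z_step (g : vec n2 -> ER) (phiz : vec n2 -> R) (gphiz : vec n2 -> vec n2)
    (rhoz : R) (v ys y : vec m) (zs z0 z1 : vec n2) :
  subgrad g z1 (vsub (vscale (-1) (tmulmv B
      (vadd y (vscale rho (vsub (gphi (mulmv B z1)) (gphi v))))))
    (vscale rhoz (vsub (gphiz z1) (gphiz z0)))) ->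
  subgrad g zs (vscale (-1) (tmulmv B ys)) ->
  rhoz * (breg phiz gphiz zs z1 + breg phiz gphiz z1 z0 - breg phiz gphiz zs z0)
  + rho * (breg phi gphi (mulmv B zs) (mulmv B z1) + breg phi gphi (mulmv B z1) v
           - breg phi gphi (mulmv B zs) v)
  <= dot (vsub ys y) (vsub (mulmv B z1) (mulmv B zs)).
Proof.
by move=> hz1 hzs; have := bregman_prox_step phiz hz1 hzs; rewrite (breg_three_point phi).
Qed.

End AdmmSteps.

Lemma rpow_pos x a : 0 < x -> rpow x a = Rpower x a.
Proof. by move=> x0; rewrite /rpow; case: Rlt_dec. Qed.

Lemma rpow_nonpos x a : x <= 0 -> rpow x a = 0.
Proof. by move=> x0; rewrite /rpow; case: Rlt_dec => // ?; lra. Qed.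

Lemma Rpower_pos x a : 0 < Rpower x a.
Proof. exact: exp_pos. Qed.

Lemma Rpower_pred x a : 0 < x -> x * Rpower x (a - 1) = Rpower x a.
Proof.
by move=> x0; rewrite -{1}(Rpower_1 x x0) -Rpower_plus; congr Rpower; ring.
Qed.

(* |x|^p = (x^2)^(p/2), which lets us compare the p-norm with the 2-norm. *)
Lemma rpow_abs_sq x p : rpow (Rabs x) p = rpow (x * x) (p / 2).
Proof.
have [->|x0] := Req_dec x 0; first by rewrite Rabs_R0 Rmult_0_l !rpow_nonpos; lra.
have ax : 0 < Rabs x by apply: Rabs_pos_lt.
have -> : x * x = Rabs x * Rabs x by rewrite -Rabs_mult Rabs_right //; nra.
rewrite !rpow_pos; try nra.
by rewrite -Rpower_mult_distr // -Rpower_plus; congr Rpower; field.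
Qed.

Lemma exp_tangent x y : exp x * (1 + y - x) <= exp y.
Proof.
have -> : exp y = exp x * exp (y - x) by rewrite -exp_plus; congr exp; ring.
apply: Rmult_le_compat_l; first exact: Rlt_le (exp_pos x).
by have := exp_ineq1_le (y - x); lra.
Qed.

Lemma Rpower_bernoulli q s : 1 <= q -> 0 < s -> 1 + q * (s - 1) <= Rpower s q.
Proof.
move=> q1 s0; rewrite /Rpower -{1}(exp_ln s s0); set L := ln s.
have at_qL := exp_tangent L (q * L).
have at_0 := exp_tangent L 0; rewrite exp_0 in at_0.
have : (q - 1) * (exp L * (1 + 0 - L)) <= (q - 1) * 1 by apply: Rmult_le_compat_l; lra.
nra.
Qed.

Lemma rpow_ge_chord q v S : 0 < q <= 1 -> 0 <= v <= S -> 0 < S ->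
  v * Rpower S (q - 1) <= rpow v q.
Proof.
move=> q01 vS S0; have [->|v0] := Req_dec v 0; first by rewrite rpow_nonpos; lra.
have vpos : 0 < v by lra.
rewrite rpow_pos // -(Rpower_pred q vpos); apply: Rmult_le_compat_l; first lra.
have -> : q - 1 = - (1 - q) by ring.
rewrite !Rpower_Ropp; apply: Rinv_le_contravar; first exact: Rpower_pos.
by apply: Rle_Rpower_l; lra.
Qed.

Lemma rpow_ge_tangent q v a : 1 <= q -> 0 <= v -> 0 < a ->
  Rpower a q + q * Rpower a (q - 1) * (v - a) <= rpow v q.
Proof.
move=> q1 v0 a0; rewrite -(Rpower_pred q a0).
have aq_pos := Rpower_pos a (q - 1).
have aR := Rmult_lt_0_compat _ _ a0 aq_pos.
have [->|vn0] := Req_dec v 0; first by rewrite rpow_nonpos; nra.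
have vpos : 0 < v by lra.
have ratio : 0 < v / a by apply: Rdiv_lt_0_compat.
have split_v : Rpower v q = a * Rpower a (q - 1) * Rpower (v / a) q.
  rewrite Rpower_pred // Rpower_mult_distr //; congr Rpower; field; lra.
have B := Rpower_bernoulli q1 ratio.
have Ba := Rmult_le_compat_l _ _ _ (Rlt_le _ _ aR) B.
have -> : a * Rpower a (q - 1) + q * Rpower a (q - 1) * (v - a)
          = a * Rpower a (q - 1) * (1 + q * (v / a - 1)) by field; lra.
by rewrite rpow_pos // split_v.
Qed.

Lemma pnorm_sq n p (u : vec n) : 0 < sumR (fun i => rpow (Rabs (u i)) p) ->
  pnorm p u ^ 2 = Rpower (sumR (fun i => rpow (Rabs (u i)) p)) (2 / p).
Proof.
by move=> T0; rewrite /pnorm rpow_pos //= Rmult_1_r -Rpower_plus; congr Rpower; rewrite /Rdiv; ring.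
Qed.

Lemma sqnorm2_pos_dim n (u : vec n) : 0 < sqnorm2 u -> 0 < INR n.
Proof.
case: n u => [|n] u; last by move=> _; exact: lt_0_INR (Nat.lt_0_succ n).
by rewrite /sqnorm2 /dot /sumR big_ord0; lra.
Qed.

Lemma pnorm_sq_ge_l2 n p (u : vec n) : 0 < p <= 2 -> 0 < sqnorm2 u ->
  sqnorm2 u <= pnorm p u ^ 2.
Proof.
move=> p02 S0; set S := sqnorm2 u; set q := p / 2.
set T := sumR (fun i => rpow (Rabs (u i)) p).
have T_ge : Rpower S q <= T.
  rewrite -(Rpower_pred q S0) Rmult_comm /S /sqnorm2 /dot -sumR_scale /T.
  apply: sumR_le => i; rewrite rpow_abs_sq Rmult_comm; apply: rpow_ge_chord => //.
    by rewrite /q; lra.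
  split; first exact: Rle_0_sqr.
  by apply: sumR_term_le => j; apply: Rle_0_sqr.
have T0 : 0 < T by apply: Rlt_le_trans T_ge; apply: Rpower_pos.
rewrite pnorm_sq // -/T -{1}(Rpower_1 S S0).
have -> : 1 = q * (2 / p) by rewrite /q; field; lra.
rewrite -Rpower_mult; apply: Rle_Rpower_l; last by split; [apply: Rpower_pos|].
by apply: Rlt_le; apply: Rdiv_lt_0_compat; lra.
Qed.

Lemma pnorm_sq_ge_scaled_l2 n p (u : vec n) : 2 <= p -> 0 < sqnorm2 u ->
  Rpower (INR n) (2 / p - 1) * sqnorm2 u <= pnorm p u ^ 2.
Proof.
move=> p2 S0; have n0 := sqnorm2_pos_dim S0.
set S := sqnorm2 u; set q := p / 2; set a := S / INR n.
set T := sumR (fun i => rpow (Rabs (u i)) p).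
have a0 : 0 < a by apply: Rdiv_lt_0_compat.
have T_ge : INR n * Rpower a q <= T.
  have -> : INR n * Rpower a q =
      sumR (fun i => Rpower a q + q * Rpower a (q - 1) * (u i * u i - a)).
    rewrite sumR_add sumR_scale sumR_sub !sumR_const -/(dot u u) -/(sqnorm2 u) -/S /a.
    by field; lra.
  apply: sumR_le => i; rewrite rpow_abs_sq; apply: rpow_ge_tangent => //.
    by rewrite /q; lra.
  exact: Rle_0_sqr.
have T0 : 0 < T by apply: Rlt_le_trans T_ge; apply: Rmult_lt_0_compat => //; apply: Rpower_pos.
rewrite pnorm_sq // -/T.
have -> : Rpower (INR n) (2 / p - 1) * S = Rpower (INR n * Rpower a q) (2 / p).
  rewrite -(Rpower_mult_distr _ _ _ n0 (Rpower_pos a q)) Rpower_mult.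
  have -> : q * (2 / p) = 1 by rewrite /q; field; lra.
  rewrite (Rpower_1 _ a0) Rpower_plus Rpower_Ropp (Rpower_1 _ n0) /a; field; lra.
apply: Rle_Rpower_l; first by apply: Rlt_le; apply: Rdiv_lt_0_compat; lra.
by split => //; apply: Rmult_lt_0_compat => //; apply: Rpower_pos.
Qed.

Lemma pnorm_sq_ge_sigma n p (u : vec n) : 0 < p ->
  Rmin 1 (rpow (INR n) (2 / p - 1)) * sqnorm2 u <= pnorm p u ^ 2.
Proof.
move=> p0; have [S0|S0] := Req_dec (sqnorm2 u) 0.
  by rewrite S0 Rmult_0_r; apply: pow2_ge_0.
have Spos : 0 < sqnorm2 u by have := sqnorm2_ge0 u; lra.
have [p2|p2] := Rle_lt_dec p 2.
  have := pnorm_sq_ge_l2 (conj p0 p2) Spos; have := Rmin_l 1 (rpow (INR n) (2 / p - 1)).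
  nra.
have := pnorm_sq_ge_scaled_l2 (Rlt_le _ _ p2) Spos.
have := Rmin_r 1 (rpow (INR n) (2 / p - 1)); rewrite rpow_pos; last exact: sqnorm2_pos_dim Spos.
nra.
Qed.

Lemma breg_ge_sqnorm2 n (S : vec n -> Prop) (psi : vec n -> R) gpsi alpha p u v :
  alpha > 0 -> p > 0 ->
  (forall u v, S u -> S v -> breg psi gpsi u v >= alpha / 2 * pnorm p (vsub u v) ^ 2) ->
  S u -> S v ->
  alpha * Rmin 1 (rpow (INR n) (2 / p - 1)) / 2 * sqnorm2 (vsub u v) <= breg psi gpsi u v.
Proof.
move=> alpha0 p0 strong Su Sv; have := strong _ _ Su Sv.
have := Rmult_le_compat_l (alpha / 2) _ _ (ltac:(lra)) (pnorm_sq_ge_sigma (vsub u v) p0).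
lra.
Qed.

(* The scalar bookkeeping of the descent: combining the two step inequalities,
   the expansion of the dual distance and the strong convexity bound on the
   residual divergence b_res1 (which absorbs the tau-term thanks to the step
   size condition) gives R(t+1) <= D_t - D_(t+1) written out termwise. *)
Lemma descent_bookkeeping (rho tau rhox rhoz gamma kappa Ny Ny' Rn Ex Ez
    bx_step bx_old bx_new bz_step bz_old bz_new bres0 bres1 bB_old bB_new bmid : R) :
  rho > 0 -> tau > 0 -> 0 <= Rn -> tau <= (kappa - 2 * gamma) * rho ->
  kappa / 2 * Rn <= bres1 ->
  Ny' = Ny - 2 * tau * (Ex + Ez) + tau ^ 2 * Rn ->
  rhox * (bx_new + bx_step - bx_old) + rho * (bmid + bres0 - bB_old) <= Ex ->
  rhoz * (bz_new + bz_step - bz_old) + rho * (bB_new + bres1 - bmid) <= Ez ->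
  rhox / rho * bx_step + rhoz / rho * bz_step + bres0 + gamma * Rn <=
  (/ (2 * tau * rho) * Ny + bB_old + rhox / rho * bx_old + rhoz / rho * bz_old)
  - (/ (2 * tau * rho) * Ny' + bB_new + rhox / rho * bx_new + rhoz / rho * bz_new).
Proof.
move=> rho0 tau0 Rn0 tau_le res_bound dual x_step z_step.
set slack := Ex + Ez - tau / 2 * Rn + rho * (bB_old - bB_new)
  + rhox * (bx_old - bx_new - bx_step) + rhoz * (bz_old - bz_new - bz_step)
  - rho * bres0 - rho * gamma * Rn.
have slack0 : 0 <= slack.
  have := Rmult_le_compat_r _ _ _ Rn0 tau_le.
  have := Rmult_le_compat_l _ _ _ (Rlt_le _ _ rho0) res_bound.
  rewrite /slack; lra.
have gap : (/ (2 * tau * rho) * Ny + bB_old + rhox / rho * bx_old + rhoz / rho * bz_old)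
    - (/ (2 * tau * rho) * Ny' + bB_new + rhox / rho * bx_new + rhoz / rho * bz_new)
    - (rhox / rho * bx_step + rhoz / rho * bz_step + bres0 + gamma * Rn) = / rho * slack.
  by rewrite dual /slack; field; lra.
have := Rmult_le_pos _ _ (Rlt_le _ _ (Rinv_0_lt_compat _ rho0)) slack0.
lra.
Qed.

Theorem lemma2
  (n1 n2 m : nat)
  (f : vec n1 -> ER) (g : vec n2 -> ER)
  (A : mat m n1) (B : mat m n2) (c : vec m)
  (X : vec n1 -> Prop) (Z : vec n2 -> Prop)
  (HX : convex_set X) (HZ : convex_set Z)
  (* the three Bregman generators and their domains *)
  (Sphi : vec m -> Prop) (phi : vec m -> R) (gphi : vec m -> vec m)
  (Sx : vec n1 -> Prop) (phix : vec n1 -> R) (gphix : vec n1 -> vec n1)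
  (Sz : vec n2 -> Prop) (phiz : vec n2 -> R) (gphiz : vec n2 -> vec n2)
  (Hphi : bregman_generator Sphi phi gphi)
  (Hphix : bregman_generator Sx phix gphix)
  (Hphiz : bregman_generator Sz phiz gphiz)
  (* parameters *)
  (rho tau rhox rhoz : R)
  (Hrho : rho > 0) (Htau : tau > 0) (Hrhox : rhox >= 0) (Hrhoz : rhoz >= 0)
  (* the iterates *)
  (x : nat -> vec n1) (z : nat -> vec n2) (y : nat -> vec m)
  (* Bregman divergences are evaluated where defined *)
  (Hdx : forall t, Sx (x t)) (Hdz : forall t, Sz (z t))
  (HdBz : forall t, Sphi (mulmv B (z t)))
  (HdAx : forall t, Sphi (vsub c (mulmv A (x t.+1))))
  (* x-update: x_{t+1} is a minimizer *)
  (Hxmin : forall t, X (x t.+1) /\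
     forall u, X u -> Sx u -> Sphi (vsub c (mulmv A u)) ->
       ERle (ERadd (f (x t.+1))
               (dot (y t) (vsub (vadd (mulmv A (x t.+1)) (mulmv B (z t))) c)
                + rho * breg phi gphi (vsub c (mulmv A (x t.+1))) (mulmv B (z t))
                + rhox * breg phix gphix (x t.+1) (x t)))
            (ERadd (f u)
               (dot (y t) (vsub (vadd (mulmv A u) (mulmv B (z t))) c)
                + rho * breg phi gphi (vsub c (mulmv A u)) (mulmv B (z t))
                + rhox * breg phix gphix u (x t))))
  (* z-update: z_{t+1} is a minimizer *)
  (Hzmin : forall t, Z (z t.+1) /\
     forall v, Z v -> Sz v -> Sphi (mulmv B v) ->
       ERle (ERadd (g (z t.+1))
               (dot (y t) (vsub (vadd (mulmv A (x t.+1)) (mulmv B (z t.+1))) c)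
                + rho * breg phi gphi (mulmv B (z t.+1)) (vsub c (mulmv A (x t.+1)))
                + rhoz * breg phiz gphiz (z t.+1) (z t)))
            (ERadd (g v)
               (dot (y t) (vsub (vadd (mulmv A (x t.+1)) (mulmv B v)) c)
                + rho * breg phi gphi (mulmv B v) (vsub c (mulmv A (x t.+1)))
                + rhoz * breg phiz gphiz v (z t))))
  (* dual update *)
  (Hyupd : forall t, y t.+1 =
     vadd (y t) (vscale tau (vsub (vadd (mulmv A (x t.+1)) (mulmv B (z t.+1))) c)))
  (* first-order optimality conditions of the subproblems *)
  (Hfox : forall t, subgrad f (x t.+1)
     (vsub (vscale (-1) (tmulmv A
              (vadd (y t) (vscale rho (vsub (gphi (mulmv B (z t)))
                                            (gphi (vsub c (mulmv A (x t.+1)))))))))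
           (vscale rhox (vsub (gphix (x t.+1)) (gphix (x t))))))
  (Hfoz : forall t, subgrad g (z t.+1)
     (vsub (vscale (-1) (tmulmv B
              (vadd (y t) (vscale rho (vsub (gphi (mulmv B (z t.+1)))
                                            (gphi (vsub c (mulmv A (x t.+1)))))))))
           (vscale rhoz (vsub (gphiz (z t.+1)) (gphiz (z t))))))
  (* Assumption 1 *)
  (Hf : closed_fun f /\ proper_fun f /\ convex_fun f)
  (Hg : closed_fun g /\ proper_fun g /\ convex_fun g)
  (Hopt : exists xo zo, X xo /\ Z zo /\
     vadd (mulmv A xo) (mulmv B zo) = c /\
     forall u v, X u -> Z v -> vadd (mulmv A u) (mulmv B v) = c ->
       ERle (ERplus (f xo) (g zo)) (ERplus (f u) (g v)))
  (alpha p : R) (Halpha : alpha > 0) (Hp : p > 0)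
  (Hsc : forall u v, Sphi u -> Sphi v ->
     breg phi gphi u v >= alpha / 2 * (pnorm p (vsub u v)) ^ 2)
  (* a KKT point (at which the Bregman divergences in D are defined) *)
  (xs : vec n1) (zs : vec n2) (ys : vec m)
  (Hkx : subgrad f xs (vscale (-1) (tmulmv A ys)))
  (Hkz : subgrad g zs (vscale (-1) (tmulmv B ys)))
  (Hkc : vadd (mulmv A xs) (mulmv B zs) = c)
  (Hdxs : Sx xs) (Hdzs : Sz zs) (HdBzs : Sphi (mulmv B zs))
  (* step-size conditions *)
  (gamma : R)
  (Hgamma : 0 < gamma < alpha * Rmin 1 (rpow (INR m) (2 / p - 1)) / 2)
  (Htau_le : tau <= (alpha * Rmin 1 (rpow (INR m) (2 / p - 1)) - 2 * gamma) * rho) :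
  forall t : nat,
    Rquant phi gphi phix gphix phiz gphiz A B c rho rhox rhoz gamma
      (x t.+1) (z t.+1) (x t) (z t)
    <= Dquant phi gphi phix gphix phiz gphiz B rho tau rhox rhoz xs zs ys (x t) (z t) (y t)
       - Dquant phi gphi phix gphix phiz gphiz B rho tau rhox rhoz xs zs ys
           (x t.+1) (z t.+1) (y t.+1).
Proof.
move=> t.
set sigma := Rmin 1 (rpow (INR m) (2 / p - 1)) in Htau_le.
set r := vsub (vadd (mulmv A (x t.+1)) (mulmv B (z t.+1))) c.
have x_step := admm_x_step phi phix Hkc (Hfox t) Hkx.
have z_step := admm_z_step phi phiz (Hfoz t) Hkz.
have residual_bound : alpha * sigma / 2 * sqnorm2 r
    <= breg phi gphi (mulmv B (z t.+1)) (vsub c (mulmv A (x t.+1))).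
  rewrite -(sqnorm2_ext (u := vsub (mulmv B (z t.+1)) (vsub c (mulmv A (x t.+1))))).
    exact: breg_ge_sqnorm2 Halpha Hp Hsc (HdBz t.+1) (HdAx t).
  by move=> i; rewrite /r /vsub /vadd; ring.
have dual_step := sqnorm2_sub_step ys (y t) r tau; rewrite -Hyupd in dual_step.
have gap_split : dot (vsub ys (y t)) r
    = dot (vsub ys (y t)) (vsub (mulmv A (x t.+1)) (mulmv A xs))
      + dot (vsub ys (y t)) (vsub (mulmv B (z t.+1)) (mulmv B zs)).
  by rewrite /r -Hkc !dotE; ring.
rewrite gap_split in dual_step.
exact: descent_bookkeeping Hrho Htau (sqnorm2_ge0 r) Htau_le residual_bound
  dual_step x_step z_step.
Qed.
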